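(* Let $n,k\geq 1$ be integers and let $r\in\{1,2,3,\dots\}\cup\{\infty\}$. Let $\pi^n_k\colon F(\mathbb{R}^n,k)\to B(\mathbb{R}^n,k)$ be the quotient map, and let $B(\mathbb{R}^n,k)\hookrightarrow B(\mathbb{R}^{n+r},k)$ be the map induced by the standard inclusion $\mathbb{R}^n\cong\mathbb{R}^n\times\{0\}\subset\mathbb{R}^{n+r}$. Then $$\mathrm{secat}(\pi^n_k)=\mathrm{cat}\big(B(\mathbb{R}^n,k)\hookrightarrow B(\mathbb{R}^{n+r},k)\big)=\mathrm{cat}_{B(\mathbb{R}^{n+r},k)}B(\mathbb{R}^n,k).$$
   Context: For a space $M$, the ordered configuration space is $F(M,k)=\{(x_1,\dots,x_k)\in M^k : x_i\neq x_j \text{ for } i\neq j\}$, and the unordered configuration space is $B(M,k)=F(M,k)/\Sigma_k$, the quotient by the free permuting action of the symmetric group $\Sigma_k$; $\pi^n_k\colon F(\mathbb{R}^n,k)\to B(\mathbb{R}^n,k)$ is the quotient covering. $\mathbb{R}^\infty=\bigcup_n\mathbb{R}^n$ with the colimit topology, and $F(\mathbb{R}^\infty,k)$, $B(\mathbb{R}^\infty,k)$ are the corresponding colimits. The sectional category $\mathrm{secat}(p)$ of a fibration $p\colon E\to B$ is the least integer $m$ such that $B$ can be covered by $m+1$ open sets each admitting a local section of $p$. The category $\mathrm{cat}(f)$ of a map $f\colon A\to B$ is the least integer $m$ such that $A$ can be covered by $m+1$ open sets on each of which the restriction of $f$ is nullhomotopic. For $A\subset B$, the subspace category $\mathrm{cat}_B(A)$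 is the least $m$ such that $A$ can be covered by $m+1$ subsets of $B$, each open in $B$ and contractible in $B$ (i.e., its inclusion into $B$ is nullhomotopic). *)

From Stdlib Require Import Reals.
From mathcomp Require Import all_boot all_fingroup.


(* Points of R^N, N <= infinity, are sequences nat -> R.
   R^m  = sequences vanishing from index m on (so R^m = R^m x {0} inside R^{m+r});
   R^oo = finitely supported sequences (= union of the R^m). *)
Definition Rpt := nat -> R.

(* A dimension: Some m = R^m, None = R^infinity. *)
Definition dim := option nat.

Definition inR (d : dim) (x : Rpt) : Prop :=
  match d with
  | Some m => forall i, (m <= i)%N -> x i = R0
  | None => exists m, forall i, (m <= i)%N -> x i = R0
  end.

Definition Conf (k : nat) := 'I_k -> Rpt.

Definition inF (k : nat) (d : dim) (c : Conf k) : Prop :=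
  (forall i, inR d (c i)) /\ (forall i j, i <> j -> c i <> c j).

(* sup-metric neighbourhood in (R^m)^k (product of Euclidean topologies). *)
Definition near_fin (k m : nat) (c : Conf k) (eps : R) (c' : Conf k) : Prop :=
  forall (i : 'I_k) j, (j < m)%N -> Rlt (Rabs (Rminus (c' i j) (c i j))) eps.

Definition openF_fin (k m : nat) (U : Conf k -> Prop) : Prop :=
  (forall c, U c -> inF k (Some m) c) /\
  (forall c, U c -> exists eps, Rlt R0 eps /\
     forall c', inF k (Some m) c' -> near_fin k m c eps c' -> U c').

(* Open subsets of F(R^d, k); for d = infinity: colimit topology of the F(R^m,k). *)
Definition openF (k : nat) (d : dim) (U : Conf k -> Prop) : Prop :=
  match d with
  | Some m => openF_fin k m U
  | None => (forall c, U c -> inF k None c) /\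
            (forall m, openF_fin k m (fun c => U c /\ inF k (Some m) c))
  end.

Definition act (k : nat) (s : {perm 'I_k}) (c : Conf k) : Conf k :=
  fun i => c (s i).

Definition invariant (k : nat) (U : Conf k -> Prop) : Prop :=
  forall s c, U c -> U (act k s c).

(* Subsets of B(R^d,k) are represented by their (Sigma_k-invariant) preimages
   in F(R^d,k); such a set is open in B(R^d,k) (quotient topology) iff the
   preimage is open in F(R^d,k). *)
Definition openB (k : nat) (d : dim) (U : Conf k -> Prop) : Prop :=
  openF k d U /\ invariant k U.

Definition sameB (k : nat) (c c' : Conf k) : Prop :=
  exists s : {perm 'I_k}, c' = act k s c.

Definition inI (t : R) : Prop := Rle R0 t /\ Rle t R1.

(* H : U x I -> B(R^e,k), with U an (invariant) subset of B(R^d,k) carrying the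
   subspace topology, U x I the product topology (basic opens V x J with V open
   in B(R^d,k), J an open interval).  H is given on representatives. *)
Definition homotopyB (k : nat) (d e : dim) (U : Conf k -> Prop)
    (H : Conf k -> R -> Conf k) : Prop :=
  (forall c t, U c -> inI t -> inF k e (H c t)) /\
  (forall s c t, U c -> inI t -> sameB k (H c t) (H (act k s c) t)) /\
  (forall O, openB k e O ->
     forall c t, U c -> inI t -> O (H c t) ->
       exists V eps, openB k d V /\ V c /\ Rlt R0 eps /\
         forall c' t', V c' -> U c' -> inI t' -> Rlt (Rabs (Rminus t' t)) eps ->
           O (H c' t')).

Definition incl_nullhomotopic (k : nat) (d e : dim) (U : Conf k -> Prop) : Prop :=
  exists (H : Conf k -> R -> Conf k) (b0 : Conf k),
    inF k e b0 /\ homotopyB k d e U H /\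
    (forall c, U c -> sameB k c (H c R0)) /\
    (forall c, U c -> sameB k b0 (H c R1)).

Definition local_section (k n : nat) (U : Conf k -> Prop) (s : Conf k -> Conf k) : Prop :=
  (forall c, U c -> inF k (Some n) (s c)) /\
  (forall c, U c -> sameB k c (s c)) /\
  (forall p c, U c -> s (act k p c) = s c) /\
  (forall O, openF k (Some n) O -> forall c, U c -> O (s c) ->
     exists V, openB k (Some n) V /\ V c /\ forall c', V c' -> U c' -> O (s c')).

Definition secat_le (k n m : nat) : Prop :=
  exists U : nat -> Conf k -> Prop,
    (forall i, (i <= m)%N -> openB k (Some n) (U i) /\ exists s, local_section k n (U i) s) /\
    (forall c, inF k (Some n) c -> exists i, (i <= m)%N /\ U i c).

Definition cat_incl_le (k n : nat) (e : dim) (m : nat) : Prop :=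
  exists U : nat -> Conf k -> Prop,
    (forall i, (i <= m)%N -> openB k (Some n) (U i) /\ incl_nullhomotopic k (Some n) e (U i)) /\
    (forall c, inF k (Some n) c -> exists i, (i <= m)%N /\ U i c).

Definition catB_le (k n : nat) (e : dim) (m : nat) : Prop :=
  exists U : nat -> Conf k -> Prop,
    (forall i, (i <= m)%N -> openB k e (U i) /\ incl_nullhomotopic k e e (U i)) /\
    (forall c, inF k (Some n) c -> exists i, (i <= m)%N /\ U i c).

(* m is the least natural number satisfying P (no such m: the invariant is infinite). *)
Definition is_least (P : nat -> Prop) (m : nat) : Prop :=
  P m /\ forall m', P m' -> (m <= m')%N.

Definition tdim (n : nat) (r : option nat) : dim :=
  match r with Some r' => Some (n + r')%N | None => None end.

From Pilot Require Import Defs.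
From Stdlib Require Import Reals Lra ClassicalEpsilon FunctionalExtensionality Classical.
From mathcomp Require Import all_boot all_fingroup.

(* All three invariants are "the least m admitting a cover by m+1 open sets of a
   given kind", so it suffices to turn every cover of one kind into a cover of
   the next kind with the same index set:

   (a) cat_incl <= m  ->  secat <= m  (homotopy lifting).  If the inclusion is
       nullhomotopic on U through H, with H(c,1) the fixed unordered
       configuration b0, lift the path t |-> H(c,t) backwards from the ordered
       configuration b0 to a path of ordered configurations; its value at time 0
       is an ordering of c, and this choice is Sigma_k-invariant and continuous
       in c, i.e. a local section.  Lifting works because pi is a covering: a
       configuration whose points are pairwise at sup-distance >= s has a
       neighbourhood meeting each Sigma_k-orbit at most once.
   (b) catB <= m  ->  cat_incl <= m: restrict the open sets and homotopies of
       B(R^(n+r),k) to B(R^n,k).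
   (c) secat <= m  ->  catB <= m.  Given a local section s over U, enlarge U to
       the configurations of R^(n+r) whose truncation to the first n coordinates
       lies in U, and contract them linearly, ordered according to s, onto the
       configuration b0 of the points 0,1,...,k-1 on the (n+1)-st axis.  For
       times t < 1 the first n coordinates keep the points distinct, and at t = 1
       the extra axis does; this is where r >= 1 is needed. *)

Open Scope R_scope.

Definition sup_le (u v : Rpt) (d : R) := forall x, Rabs (u x - v x) <= d.
Definition sup_lt (u v : Rpt) (d : R) := exists d', d' < d /\ sup_le u v d'.

Definition conf_near (k : nat) (y w : Conf k) (d : R) := forall a, sup_lt (y a) (w a) d.

Definition separated (k : nat) (y : Conf k) (s : R) :=
  forall a b, a <> b -> exists x, s <= Rabs (y a x - y b x).

Lemma sup_lt_sym u v d : sup_lt u v d -> sup_lt v u d.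
Proof.
  intros [d' [H1 H2]]; exists d'; split; auto; intro x.
  rewrite Rabs_minus_sym; apply H2.
Qed.

Lemma sup_lt_trans u v w d1 d2 : sup_lt u v d1 -> sup_lt v w d2 -> sup_lt u w (d1 + d2).
Proof.
  intros [e1 [H1 H2]] [e2 [H3 H4]]; exists (e1 + e2); split; [lra|].
  intro x; specialize (H2 x); specialize (H4 x).
  replace (u x - w x) with ((u x - v x) + (v x - w x)) by ring.
  eapply Rle_trans; [apply Rabs_triang| lra].
Qed.

Lemma sup_lt_mono u v d d' : sup_lt u v d -> d <= d' -> sup_lt u v d'.
Proof. intros [e [H1 H2]] H; exists e; split; auto; lra. Qed.

Lemma sup_lt_coord u v d x : sup_lt u v d -> Rabs (u x - v x) < d.
Proof. intros [e [H1 H2]]; specialize (H2 x); lra. Qed.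

Lemma sup_lt_refl u d : 0 < d -> sup_lt u u d.
Proof. intro H; exists 0; split; auto; intro x; rewrite Rminus_diag Rabs_R0; lra. Qed.

Lemma conf_near_trans k y w z d1 d2 :
  conf_near k y w d1 -> conf_near k w z d2 -> conf_near k y z (d1 + d2).
Proof. intros H1 H2 a; eapply sup_lt_trans; eauto. Qed.

Lemma conf_near_mono k y w d d' : conf_near k y w d -> d <= d' -> conf_near k y w d'.
Proof. intros H1 H2 a; eapply sup_lt_mono; eauto. Qed.

Lemma conf_near_refl k y d : 0 < d -> conf_near k y y d.
Proof. intros H a; apply sup_lt_refl; auto. Qed.

(* Covering property in its basic form: a point of an s-separated configuration
   cannot be close to the d1- and d2-neighbours (d1 + d2 <= s) of two of its points. *)
Lemma separated_index_eq k (y : Conf k) s a b z d1 d2 :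
  separated k y s -> sup_lt (y a) z d1 -> sup_lt (y b) z d2 -> d1 + d2 <= s -> a = b.
Proof.
  intros Hs H1 H2 Hd. destruct (classic (a = b)) as [|Hn]; auto.
  destruct (Hs a b Hn) as [x Hx].
  pose proof (sup_lt_coord _ _ _ x (sup_lt_trans _ _ _ _ _ H1 (sup_lt_sym _ _ _ H2))). lra.
Qed.

Lemma finite_min_pos (T : finType) (P : T -> R -> Prop) :
  (forall x, exists s, 0 < s /\ P x s) ->
  (forall x s s', P x s -> 0 < s' <= s -> P x s') ->
  exists s, 0 < s /\ forall x, P x s.
Proof.
  intros H Hm.
  assert (Hl : forall l : seq T, exists s, 0 < s /\ forall x, x \in l -> P x s).
  { elim=> [|y l [s [Hs IH]]].
    - exists 1; split; [lra| intros x Hx; by rewrite in_nil in Hx].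
    - destruct (H y) as [s' [Hs' Hy]].
      exists (Rmin s s'); split; [apply Rmin_pos; auto|].
      intros x; rewrite in_cons => /orP [/eqP ->|Hx].
      + eapply Hm; eauto; split; [apply Rmin_pos; auto| apply Rmin_r].
      + eapply Hm; eauto; split; [apply Rmin_pos; auto| apply Rmin_l]. }
  destruct (Hl (enum T)) as [s [Hs Hs']]; exists s; split; auto.
  intro x; apply Hs'; by rewrite mem_enum.
Qed.

Lemma finite_max_below (T : finType) (P : T -> R -> Prop) d :
  (forall x, exists d', d' < d /\ P x d') -> (forall x d1 d2, P x d1 -> d1 <= d2 -> P x d2) ->
  exists d', d' < d /\ forall x, P x d'.
Proof.
  intros H Hm. destruct (finite_min_pos T (fun x s => P x (d - s))) as [s [Hs H2]].
  - intro x; destruct (H x) as [d' [H1 H2]]; exists (d - d'); split; [lra|].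
    replace (d - (d - d')) with d' by ring; auto.
  - intros x s s' H1 H2; eapply Hm; eauto; lra.
  - exists (d - s); split; [lra|auto].
Qed.

Lemma prefix_max_below (f : nat -> R) d M :
  (forall x, (x < M)%N -> f x < d) -> exists d', d' < d /\ forall x, (x < M)%N -> f x <= d'.
Proof.
  induction M as [|M IH]; intros H.
  - exists (d - 1); split; [lra| intros x Hx; inversion Hx].
  - destruct IH as [d' [H1 H2]].
    + intros x Hx; apply H; apply (ltn_trans Hx); auto.
    + exists (Rmax d' (f M)); split.
      * apply Rmax_lub_lt; auto; apply H; auto.
      * intros x Hx. rewrite ltnS leq_eqVlt in Hx. case/orP: Hx => [/eqP ->|Hx].
        -- apply Rmax_r.
        -- eapply Rle_trans; [apply H2; auto| apply Rmax_l].
Qed.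

Lemma sup_lt_of_prefix (u v : Rpt) M d :
  (forall x, (M <= x)%N -> u x = v x) -> 0 < d ->
  (forall x, (x < M)%N -> Rabs (u x - v x) < d) -> sup_lt u v d.
Proof.
  intros Hz Hd H. destruct (prefix_max_below (fun x => Rabs (u x - v x)) d M H) as [d' [H1 H2]].
  exists (Rmax d' 0); split; [apply Rmax_lub_lt; auto|].
  intro x. destruct (leqP M x) as [Hx|Hx].
  - rewrite (Hz x Hx) Rminus_diag Rabs_R0; apply Rmax_r.
  - eapply Rle_trans; [apply H2; auto| apply Rmax_l].
Qed.

Lemma finite_max_nat (T : finType) (P : T -> nat -> Prop) :
  (forall x, exists m, P x m) -> (forall x m m', P x m -> (m <= m')%N -> P x m') ->
  exists m, forall x, P x m.
Proof.
  intros H Hm.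
  assert (Hl : forall l : seq T, exists m, forall x, x \in l -> P x m).
  { elim=> [|y l [m IH]]; [exists O; intros x Hx; by rewrite in_nil in Hx|].
    destruct (H y) as [m' Hy]; exists (maxn m m'); intros x.
    rewrite in_cons => /orP [/eqP ->|Hx].
    - eapply Hm; eauto; apply leq_maxr.
    - eapply Hm; [apply IH; auto| apply leq_maxl]. }
  destruct (Hl (enum T)) as [m Hm']; exists m; intro x; apply Hm'; by rewrite mem_enum.
Qed.

Lemma act_comp k (s t : {perm 'I_k}) c :
  Defs.act k s (Defs.act k t c) = Defs.act k (s * t)%g c.
Proof. apply functional_extensionality => i; by rewrite /Defs.act permM. Qed.

Lemma act_id k c : Defs.act k 1%g c = c.
Proof. apply functional_extensionality => i; by rewrite /Defs.act perm1. Qed.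

Lemma act_inv k (s : {perm 'I_k}) c : Defs.act k (s^-1)%g (Defs.act k s c) = c.
Proof. by rewrite act_comp mulVg act_id. Qed.

Lemma sameB_refl k c : sameB k c c.
Proof. exists 1%g; by rewrite act_id. Qed.

Lemma sameB_sym k c c' : sameB k c c' -> sameB k c' c.
Proof. intros [s ->]; exists (s^-1)%g; by rewrite act_inv. Qed.

Lemma sameB_trans k c1 c2 c3 : sameB k c1 c2 -> sameB k c2 c3 -> sameB k c1 c3.
Proof. intros [s ->] [t ->]; exists (t * s)%g; by rewrite act_comp. Qed.

Lemma sameB_act k c s : sameB k c (Defs.act k s c).
Proof. by exists s. Qed.

Lemma inF_act k e c s : inF k e c -> inF k e (Defs.act k s c).
Proof.
  intros [H1 H2]; split; [intro i; apply H1|].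
  intros i j Hij; apply H2. intro E; apply Hij; exact (perm_inj E).
Qed.

Lemma inF_sameB k e c c' : inF k e c -> sameB k c c' -> inF k e c'.
Proof. intros H [s ->]; by apply inF_act. Qed.

Lemma act_perm_inj k (q : Conf k) (s t : {perm 'I_k}) :
  (forall i j, i <> j -> q i <> q j) -> Defs.act k s q = Defs.act k t q -> s = t.
Proof.
  intros Hq E. apply/permP => i. have := equal_f E i; rewrite /Defs.act => E'.
  destruct (classic (s i = t i)) as [|Hn]; auto. exfalso; exact (Hq _ _ Hn E').
Qed.

Lemma conf_near_act k y w d (p : {perm 'I_k}) :
  conf_near k y w d -> conf_near k (Defs.act k p y) (Defs.act k p w) d.
Proof. intros H a; apply H. Qed.

Lemma separated_act k y s (p : {perm 'I_k}) : separated k y s -> separated k (Defs.act k p y) s.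
Proof. intros H a b Hab; apply H; intro E; apply Hab; exact (perm_inj E). Qed.

Lemma separated_exists k e y : inF k e y -> exists s, 0 < s /\ separated k y s.
Proof.
  intros [Hr Hd].
  assert (Hp : forall a b, a <> b -> exists x, y a x <> y b x).
  { intros a b Hab. apply NNPP; intro Hn. apply (Hd a b Hab).
    apply functional_extensionality => x. apply NNPP; intro; apply Hn; eauto. }
  destruct (finite_min_pos _ (fun a s => forall b, a <> b -> exists x, s <= Rabs (y a x - y b x)))
    as [s [Hs H]].
  - intro a. apply (finite_min_pos _ (fun b s => a <> b -> exists x, s <= Rabs (y a x - y b x))).
    + intro b. destruct (classic (a = b)) as [Heq|Hn].
      * exists 1; split; [lra| intro; contradiction].
      * destruct (Hp a b Hn) as [x Hx]. exists (Rabs (y a x - y b x)); split.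
        -- apply Rabs_pos_lt; lra.
        -- intros _; exists x; lra.
    + intros b s s' H1 H2 H3. destruct (H1 H3) as [x Hx]; exists x; lra.
  - intros a s s' H1 H2 b Hb. destruct (H1 b Hb) as [x Hx]; exists x; lra.
  - exists s; split; auto.
Qed.

Lemma act_fixed_of_near k (y w : Conf k) s d1 d2 (p : {perm 'I_k}) :
  separated k y s -> conf_near k y w d1 -> conf_near k (Defs.act k p y) w d2 -> d1 + d2 <= s ->
  Defs.act k p y = y.
Proof.
  intros Hs H1 H2 Hd. apply functional_extensionality => a; rewrite /Defs.act.
  f_equal. symmetry. apply (separated_index_eq k y s a (p a) (w a) d1 d2); auto; apply H2.
Qed.

Lemma act_fixed_of_near_r k (y w : Conf k) s d1 d2 (p : {perm 'I_k}) :
  separated k y s -> conf_near k y w d1 -> conf_near k y (Defs.act k p w) d2 -> d1 + d2 <= s ->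
  Defs.act k p w = w.
Proof.
  intros Hs H1 H2 Hd. apply functional_extensionality => a; rewrite /Defs.act.
  f_equal. symmetry.
  apply (separated_index_eq k y s a (p a) (w (p a)) d2 d1); [auto| apply H2| apply H1| lra].
Qed.

Lemma sameB_near_eq k (y w w' : Conf k) s d1 d2 :
  separated k y s -> conf_near k y w d1 -> sameB k w w' -> conf_near k y w' d2 ->
  d1 + d2 <= s -> w' = w.
Proof. intros Hs H1 [p ->] H2 Hd; eapply act_fixed_of_near_r; eauto. Qed.

Lemma near_reorder k h h' g d (sg : {perm 'I_k}) :
  conf_near k h (Defs.act k sg h') d -> sameB k h g -> exists w, sameB k h' w /\ conf_near k g w d.
Proof.
  intros Hn [t ->]. exists (Defs.act k t (Defs.act k sg h')); split.
  - rewrite act_comp; apply sameB_act.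
  - apply conf_near_act; auto.
Qed.

(* Real induction downwards on [al, be]: a property that holds at be, is
   inherited upwards, and near every b propagates from points just above b to
   points just below b, holds at al.  This is connectedness of [al, be]; it
   replaces all compactness/connectedness arguments on the time interval. *)
Lemma real_induction_down (al be : R) (G : R -> Prop) :
  al <= be ->
  (forall a a', al <= a -> a <= a' -> a' <= be -> G a -> G a') ->
  G be ->
  (forall b, al <= b <= be -> exists eps, 0 < eps /\
      forall a1 a2, al <= a2 <= b -> b <= a1 <= be -> a1 - b < eps -> b - a2 < eps ->
        G a1 -> G a2) ->
  G al.
Proof.
  intros Hab Hup Hbe Hstep. apply NNPP; intro Hn.
  set (E := fun a => al <= a <= be /\ ~ G a).
  destruct (completeness E) as [b [Hub Hlub]].
  { exists be; intros x [Hx _]; lra. }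
  { exists al; split; [lra|auto]. }
  assert (Hb1 : al <= b) by (apply Hub; split; [lra|auto]).
  assert (Hb2 : b <= be) by (apply Hlub; intros x [Hx _]; lra).
  destruct (Hstep b (conj Hb1 Hb2)) as [eps [He Hs]].
  set (a1 := Rmin be (b + eps/2)). set (a2 := Rmax al (b - eps/2)).
  assert (Ha1 : b <= a1 <= be /\ a1 - b < eps).
  { unfold a1; split; [split|]; [apply Rmin_glb; lra|apply Rmin_l|].
    pose proof (Rmin_r be (b + eps/2)); lra. }
  assert (Ha2 : al <= a2 <= b /\ b - a2 < eps).
  { unfold a2; split; [split|]; [apply Rmax_l| apply Rmax_lub; lra|].
    pose proof (Rmax_r al (b - eps/2)); lra. }
  assert (G1 : G a1).
  { unfold a1. destruct (Rle_dec be (b + eps/2)) as [Hle|Hlt].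
    - rewrite Rmin_left; auto.
    - rewrite Rmin_right; [|lra]. apply NNPP; intro Hg.
      assert (b + eps/2 <= b) by (apply Hub; split; [lra|auto]). lra. }
  assert (G2 : G a2) by (apply (Hs a1 a2); tauto).
  unfold a2 in G2. destruct (Rle_dec (b - eps/2) al) as [Hle|Hlt].
  - rewrite Rmax_left in G2; auto.
  - rewrite Rmax_right in G2; [|lra].
    assert (exists x, E x /\ b - eps/2 < x) as [x [[Hx1 Hx2] Hx3]].
    { apply NNPP; intro Hno. assert (b <= b - eps/2); [|lra].
      apply Hlub; intros x Ex. apply Rnot_lt_le; intro; apply Hno; eauto. }
    apply Hx2. eapply Hup; [| |apply Hx1| apply G2]; lra.
Qed.

(* Levels of a dimension e: the finite m with R^m = R^e (resp. R^m inside R^oo).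
   Openness in F(R^e,k) is tested level by level with the sup-metric. *)
Definition is_level (e : dim) (m : nat) : Prop :=
  match e with Some M => m = M | None => True end.

Lemma inR_of_level e m x : is_level e m -> inR (Some m) x -> inR e x.
Proof. destruct e; simpl; [intros ->; auto| intros _ H; exists m; auto]. Qed.

Lemma inF_of_level k e m c : is_level e m -> inF k (Some m) c -> inF k e c.
Proof. intros Hl [H1 H2]; split; auto; intro i; eapply inR_of_level; eauto. Qed.

Lemma inR_mono m m' x : inR (Some m) x -> (m <= m')%N -> inR (Some m') x.
Proof. intros H Hmm i Hi; apply H; exact (leq_trans Hmm Hi). Qed.

Lemma inF_has_level k e c : inF k e c -> exists m, is_level e m /\ inF k (Some m) c.
Proof.
  destruct e as [M|]; intros [H1 H2].
  - exists M; split; [reflexivity| split; auto].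
  - destruct (finite_max_nat _ (fun a m => inR (Some m) (c a))) as [m Hm].
    + intro a; exact (H1 a).
    + intros a m m' H Hmm; eapply inR_mono; eauto.
    + exists m; split; [exact I| split; auto].
Qed.

Definition open_levelwise (k : nat) (e : dim) (X : Conf k -> Prop) : Prop :=
  (forall c, X c -> inF k e c) /\
  (forall m, is_level e m -> forall c, X c -> inF k (Some m) c ->
     exists eps, 0 < eps /\ forall c', inF k (Some m) c' -> near_fin k m c eps c' -> X c').

Lemma openF_levelwise k e X : openF k e X <-> open_levelwise k e X.
Proof.
  destruct e as [M|]; simpl; split.
  - intros [H1 H2]; split; auto. intros m -> c Hc _; auto.
  - intros [H1 H2]; split; auto. intros c Hc; apply (H2 M (erefl M) c Hc (H1 c Hc)).
  - intros [H1 H2]; split; auto. intros m _ c Hc Hcm.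
    destruct (H2 m) as [_ H3]. destruct (H3 c (conj Hc Hcm)) as [eps [He H4]].
    exists eps; split; auto; intros c' Hc' Hn; apply (H4 c' Hc' Hn).
  - intros [H1 H2]; split; auto. intros m; split; [tauto|].
    intros c [Hc Hcm]. destruct (H2 m I c Hc Hcm) as [eps [He H4]].
    exists eps; split; auto.
Qed.

Lemma near_fin_coord k m c c' eps a x :
  inF k (Some m) c -> inF k (Some m) c' -> 0 < eps -> near_fin k m c eps c' ->
  Rabs (c' a x - c a x) < eps.
Proof.
  intros [H1 _] [H2 _] He Hn. destruct (leqP m x) as [Hx|Hx].
  - rewrite (H1 a x Hx) (H2 a x Hx) Rminus_diag Rabs_R0; auto.
  - apply Hn; auto.
Qed.

Lemma near_fin_sup_lt k m c c' eps a :
  inF k (Some m) c -> inF k (Some m) c' -> 0 < eps -> near_fin k m c eps c' ->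
  sup_lt (c a) (c' a) eps.
Proof.
  intros H1 H2 He Hn. apply (sup_lt_of_prefix _ _ m); auto.
  - intros x Hx; destruct H1 as [H1 _]; destruct H2 as [H2 _].
    rewrite (H1 a x Hx) (H2 a x Hx); auto.
  - intros x Hx; rewrite Rabs_minus_sym; apply Hn; auto.
Qed.

Lemma near_fin_mono k m c c' r r' : near_fin k m c r c' -> r <= r' -> near_fin k m c r' c'.
Proof. intros H Hr i j Hj; eapply Rlt_le_trans; [apply H; auto| auto]. Qed.

Lemma near_fin_act k m c eps c' (p : {perm 'I_k}) :
  near_fin k m c eps c' -> near_fin k m (Defs.act k p c) eps (Defs.act k p c').
Proof. intros H i j Hj; apply H; auto. Qed.

Lemma open_ball k e (y : Conf k) (sg : {perm 'I_k}) d :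
  openF k e (fun w => inF k e w /\ conf_near k y (Defs.act k sg w) d).
Proof.
  apply openF_levelwise; split; [tauto|]. intros m Hl w [Hw Hn] Hwm.
  destruct (finite_max_below _ (fun a d' => sup_le (y a) (Defs.act k sg w a) d') d)
    as [d' [Hd' Hd]].
  { intro a; destruct (Hn a) as [d1 [H1 H2]]; exists d1; auto. }
  { intros a d1 d2 H1 H2 x; specialize (H1 x); lra. }
  exists ((d - d')/2); split; [lra|]. intros w' Hw'm Hnf. split; [eapply inF_of_level; eauto|].
  intro a. replace d with ((d' + (d - d')/2) + (d - d')/2) by field.
  apply sup_lt_trans with (v := w (sg a)).
  - exists d'; split; [lra| apply Hd].
  - apply (near_fin_sup_lt k m w w' _ (sg a)); auto; lra.
Qed.

Lemma open_union k e (I : Type) (X : I -> Conf k -> Prop) :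
  (forall i, openF k e (X i)) -> openF k e (fun c => exists i, X i c).
Proof.
  intros H; apply openF_levelwise; split.
  - intros c [i Hi]; destruct (proj1 (openF_levelwise _ _ _) (H i)) as [H1 _]; eauto.
  - intros m Hl c [i Hi] Hcm. destruct (proj1 (openF_levelwise _ _ _) (H i)) as [_ H2].
    destruct (H2 m Hl c Hi Hcm) as [eps [He H3]]; exists eps; split; eauto.
Qed.

Lemma open_inter k e X Y : openF k e X -> openF k e Y -> openF k e (fun c => X c /\ Y c).
Proof.
  intros HX HY. apply openF_levelwise in HX, HY. destruct HX as [X1 X2], HY as [Y1 Y2].
  apply openF_levelwise; split; [intros c [Hc _]; auto|].
  intros m Hl c [Hx Hy] Hcm. destruct (X2 m Hl c Hx Hcm) as [e1 [He1 H1]].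
  destruct (Y2 m Hl c Hy Hcm) as [e2 [He2 H2]].
  exists (Rmin e1 e2); split; [apply Rmin_pos; auto|]. intros c' Hc' Hn; split.
  - apply H1; auto; intros i j Hj; eapply Rlt_le_trans; [apply Hn; auto| apply Rmin_l].
  - apply H2; auto; intros i j Hj; eapply Rlt_le_trans; [apply Hn; auto| apply Rmin_r].
Qed.

Lemma openB_inter k e X Y : openB k e X -> openB k e Y -> openB k e (fun c => X c /\ Y c).
Proof.
  intros [H1 H2] [H3 H4]; split; [apply open_inter; auto|].
  intros s c [Hx Hy]; split; auto.
Qed.

Lemma open_saturation k e X : openF k e X -> openB k e (fun c => exists p, X (Defs.act k p c)).
Proof.
  intros HX; apply openF_levelwise in HX; destruct HX as [X1 X2]; split.
  - apply openF_levelwise; split.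
    + intros c [p Hp]. have := inF_act _ _ _ (p^-1)%g (X1 _ Hp). by rewrite act_inv.
    + intros m Hl c [p Hp] Hcm.
      destruct (X2 m Hl _ Hp (inF_act _ _ _ p Hcm)) as [eps [He H]].
      exists eps; split; auto; intros c' Hc' Hn; exists p; apply H.
      * apply inF_act; auto.
      * apply near_fin_act; auto.
  - intros s c [p Hp]; exists (p * s^-1)%g. by rewrite act_comp -mulgA mulVg mulg1.
Qed.

Definition nbhdB k e (y : Conf k) d (w : Conf k) : Prop :=
  inF k e w /\ exists sg, conf_near k y (Defs.act k sg w) d.

Lemma open_nbhdB k e y d : openB k e (nbhdB k e y d).
Proof.
  split.
  - have H := open_union k e _ (fun sg w => inF k e w /\ conf_near k y (Defs.act k sg w) d)
       (fun sg => open_ball k e y sg d).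
    apply openF_levelwise in H; apply openF_levelwise; destruct H as [H1 H2]; split.
    + intros c [Hc _]; auto.
    + intros m Hl c [Hc [sg Hs]] Hcm.
      destruct (H2 m Hl c (ex_intro _ sg (conj Hc Hs)) Hcm) as [eps [He H3]].
      exists eps; split; auto; intros c' Hc' Hn.
      destruct (H3 c' Hc' Hn) as [sg' [Hc'' Hs']]; split; eauto.
  - intros s c [Hc [sg Hs]]; split; [apply inF_act; auto|].
    exists (sg * s^-1)%g. by rewrite act_comp -mulgA mulVg mulg1.
Qed.

Definition cont_on k (D : R -> Prop) (g : R -> Conf k) (t : R) : Prop :=
  forall d, 0 < d -> exists eps, 0 < eps /\
    forall t', D t' -> Rabs (t' - t) < eps -> conf_near k (g t) (g t') d.

Lemma cont_on_sub k (D D' : R -> Prop) g t :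
  (forall x, D' x -> D x) -> cont_on k D g t -> cont_on k D' g t.
Proof. intros Hs H d Hd; destruct (H d Hd) as [eps [He H1]]; exists eps; split; auto. Qed.

Lemma cont_on_glue k (l g : R -> Conf k) lo a hi :
  l a = g a ->
  (forall u, lo <= u <= a -> cont_on k (fun x => lo <= x <= a) l u) ->
  (forall u, a <= u <= hi -> cont_on k (fun x => a <= x <= hi) g u) ->
  forall u, lo <= u <= hi ->
    cont_on k (fun x => lo <= x <= hi) (fun t => if Rlt_dec t a then l t else g t) u.
Proof.
  intros Ela Cl Cg u Hu d Hd.
  destruct (Rlt_dec u a) as [Hlt|Hge]; [|destruct (Rlt_dec a u) as [Hgt|Heq]].
  - destruct (Cl u ltac:(lra) d Hd) as [e1 [He1 C1]].
    exists (Rmin e1 (a - u)); split; [apply Rmin_pos; lra|].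
    intros t' Ht' Htu. pose proof (Rmin_l e1 (a - u)); pose proof (Rmin_r e1 (a - u)).
    apply Rabs_def2 in Htu. destruct (Rlt_dec t' a); [|lra].
    apply C1; [lra| apply Rabs_def1; lra].
  - destruct (Cg u ltac:(lra) d Hd) as [e1 [He1 C1]].
    exists (Rmin e1 (u - a)); split; [apply Rmin_pos; lra|].
    intros t' Ht' Htu. pose proof (Rmin_l e1 (u - a)); pose proof (Rmin_r e1 (u - a)).
    apply Rabs_def2 in Htu. destruct (Rlt_dec t' a); [lra|].
    apply C1; [lra| apply Rabs_def1; lra].
  - have Eu : u = a by lra. subst u.
    destruct (Cl a ltac:(lra) d Hd) as [e1 [He1 C1]].
    destruct (Cg a ltac:(lra) d Hd) as [e2 [He2 C2]].
    exists (Rmin e1 e2); split; [apply Rmin_pos; lra|].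
    intros t' Ht' Htu. pose proof (Rmin_l e1 e2); pose proof (Rmin_r e1 e2).
    destruct (Rlt_dec t' a) as [Hl|Hl].
    + rewrite -Ela. apply C1; lra.
    + apply C2; lra.
Qed.

Lemma lifts_agree k (al be : R) (g1 g2 : R -> Conf k) :
  al <= be ->
  (forall t, al <= t <= be -> sameB k (g1 t) (g2 t)) ->
  (forall t, al <= t <= be -> exists s, 0 < s /\ separated k (g1 t) s) ->
  (forall t, al <= t <= be -> cont_on k (fun x => al <= x <= be) g1 t) ->
  (forall t, al <= t <= be -> cont_on k (fun x => al <= x <= be) g2 t) ->
  g1 be = g2 be -> forall t, al <= t <= be -> g1 t = g2 t.
Proof.
  intros Hab Hs Hsep Hc1 Hc2 Hbe t Ht.
  apply (real_induction_down al be (fun a => forall v, a <= v <= be -> g1 v = g2 v)); auto.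
  - intros a a' _ H1 H2 H v Hv; apply H; lra.
  - intros v Hv; replace v with be by lra; auto.
  - intros b Hb. destruct (Hsep b Hb) as [s [Hs0 Hsb]].
    destruct (Hc1 b Hb (s/3)) as [e1 [He1 C1]]; [lra|].
    destruct (Hc2 b Hb (s/3)) as [e2 [He2 C2]]; [lra|].
    exists (Rmin e1 e2); split; [apply Rmin_pos; auto|].
    intros a1 a2 Ha2 Ha1 Hd1 Hd2 HG1.
    pose proof (Rmin_l e1 e2); pose proof (Rmin_r e1 e2).
    assert (Eb : g1 b = g2 b).
    { have E1 : g1 a1 = g2 a1 by apply HG1; lra.
      have N1 := C1 a1 ltac:(lra) ltac:(apply Rabs_def1; lra).
      have N2 := C2 a1 ltac:(lra) ltac:(apply Rabs_def1; lra).
      rewrite -E1 in N2. destruct (Hs b Hb) as [p Hp]. rewrite Hp in N2 *.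
      symmetry; eapply act_fixed_of_near; eauto; lra. }
    intros v Hv. destruct (Rle_dec a1 v) as [Hle|Hlt]; [apply HG1; lra|].
    have N1 := C1 v ltac:(lra) ltac:(apply Rabs_def1; lra).
    have N2 := C2 v ltac:(lra) ltac:(apply Rabs_def1; lra).
    rewrite -Eb in N2. destruct (Hs v ltac:(lra)) as [p Hp]. rewrite Hp in N2 *.
    symmetry; eapply act_fixed_of_near_r; eauto; lra.
Qed.

Section HomotopyLifting.
Variables (k n : nat) (e : dim) (U : Conf k -> Prop) (H : Conf k -> R -> Conf k) (b0 : Conf k).
Hypothesis HU : openB k (Some n) U.
Hypothesis HH : homotopyB k (Some n) e U H.
Hypothesis H_start : forall c, U c -> sameB k c (H c R0).
Hypothesis H_end : forall c, U c -> sameB k b0 (H c R1).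

Lemma H_inF c t : U c -> inI t -> inF k e (H c t).
Proof. destruct HH as [Hf _]; auto. Qed.

Lemma H_near c t d : U c -> inI t -> 0 < d ->
  exists V eps, openB k (Some n) V /\ V c /\ 0 < eps /\
    forall c' t', V c' -> U c' -> inI t' -> Rabs (t' - t) < eps ->
      forall g, sameB k (H c t) g -> exists w, sameB k (H c' t') w /\ conf_near k g w d.
Proof.
  intros Hc Ht Hd. destruct HH as [Hf [Heq Hcont]].
  destruct (Hcont (nbhdB k e (H c t) d) (open_nbhdB k e _ d) c t Hc Ht)
    as [V [eps [HV [Vc [He HP]]]]].
  { split; [apply Hf; auto| exists 1%g; rewrite act_id; apply conf_near_refl; auto]. }
  exists V, eps; split; [auto|split; [auto|split; [auto|]]]. intros c' t' Vc' Uc' Ht' Hd' g Hg.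
  destruct (HP c' t' Vc' Uc' Ht' Hd') as [_ [sg Hs]]. eapply near_reorder; eauto.
Qed.

Definition lift_on c a (g : R -> Conf k) : Prop :=
  (forall u, a <= u <= 1 -> sameB k (H c u) (g u)) /\ g 1 = b0 /\
  (forall u, a <= u <= 1 -> cont_on k (fun x => a <= x <= 1) g u).

(* The ordering of H c t that is d-close to the reference y0 (a local sheet of pi). *)
Definition local_lift c (y0 : Conf k) d t : Conf k :=
  epsilon (inhabits y0) (fun z => sameB k (H c t) z /\ conf_near k y0 z d).

Lemma local_lift_spec c y0 d t : (exists z, sameB k (H c t) z /\ conf_near k y0 z d) ->
  sameB k (H c t) (local_lift c y0 d t) /\ conf_near k y0 (local_lift c y0 d t) d.
Proof. intro Hz; apply (epsilon_spec (inhabits y0) _ Hz). Qed.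

Lemma local_lift_uniq c y0 d t s z d2 : separated k y0 s -> d + d2 <= s ->
  (exists z, sameB k (H c t) z /\ conf_near k y0 z d) ->
  sameB k (H c t) z -> conf_near k y0 z d2 -> z = local_lift c y0 d t.
Proof.
  intros Hs Hd Hex Hz Hn. destruct (local_lift_spec c y0 d t Hex) as [S1 S2].
  eapply sameB_near_eq; eauto. eapply sameB_trans; [apply sameB_sym, S1| auto].
Qed.

Lemma local_lift_cont c y0 d s (D : R -> Prop) : U c -> separated k y0 s -> 4 * d <= s -> 0 < d ->
  (forall t, D t -> inI t) ->
  (forall t, D t -> exists z, sameB k (H c t) z /\ conf_near k y0 z d) ->
  forall u, D u -> cont_on k D (local_lift c y0 d) u.
Proof.
  intros Hc Hs Hd Hd0 HDI Hex u Hu d' Hd'.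
  destruct (H_near c u (Rmin d' d) Hc (HDI u Hu)) as [V [eps1 [_ [Vc [He1 P]]]]];
    [apply Rmin_pos; auto|].
  exists eps1; split; auto. intros t' Ht' Htu.
  destruct (local_lift_spec c y0 d u (Hex u Hu)) as [Su Nu].
  destruct (P c t' Vc Hc (HDI t' Ht') Htu _ Su) as [w [Sw Nw]].
  destruct (local_lift_spec c y0 d t' (Hex t' Ht')) as [St Nt].
  assert (E : w = local_lift c y0 d t').
  { eapply sameB_near_eq; [apply Hs| apply Nt| |apply (conf_near_trans _ _ _ _ _ _ Nu Nw)|].
    - eapply sameB_trans; [apply sameB_sym, St| auto].
    - pose proof (Rmin_r d' d); lra. }
  rewrite -E. eapply conf_near_mono; [apply Nw| apply Rmin_l].
Qed.

Lemma lift_in_sheet c g a lo hi y0 s : U c -> separated k y0 s -> 0 < s ->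
  0 <= lo -> a <= lo <= hi -> hi <= 1 -> lift_on c a g ->
  (forall t, lo <= t <= hi -> exists z, sameB k (H c t) z /\ conf_near k y0 z (s/4)) ->
  conf_near k y0 (g hi) (s/2) ->
  forall t, lo <= t <= hi -> g t = local_lift c y0 (s/4) t.
Proof.
  intros Hc Hs Hs0 Hlo Ha Hhi [L1 [_ L3]] Hex Nhi t Ht.
  have HDI : forall t, lo <= t <= hi -> inI t by (intros ? ?; unfold inI; lra).
  refine (lifts_agree k lo hi g _ ltac:(lra) _ _ _ _ _ t Ht).
  - intros v Hv. eapply sameB_trans; [apply sameB_sym, L1; lra|].
    apply local_lift_spec, Hex; auto.
  - intros v Hv. apply (separated_exists k e).
    eapply inF_sameB; [apply (H_inF c v Hc (HDI v Hv))| apply L1; lra].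
  - intros v Hv. eapply cont_on_sub; [|apply L3; lra]. simpl; intros; lra.
  - apply (local_lift_cont c y0 (s/4) s); auto; lra.
  - eapply local_lift_uniq; [apply Hs| |apply Hex; lra| apply L1; lra| apply Nhi]. lra.
Qed.

(* Existence of the lift on [0, 1], by real induction from time 1 downwards:
   near each time b, extend the lift by the local sheet through it. *)
Lemma lift_exists c : U c -> exists g, lift_on c 0 g.
Proof.
  intro Hc.
  apply (real_induction_down 0 1 (fun a => exists g, lift_on c a g)); [lra| | |].
  - intros a a' Ha Haa' Ha' [g [L1 [L2 L3]]]; exists g; split; [|split]; auto.
    + intros u Hu; apply L1; lra.
    + intros u Hu; eapply cont_on_sub; [|apply L3; lra]; simpl; intros; lra.
  - exists (fun _ => b0); split; [|split]; auto.
    + intros u Hu; replace u with R1 by lra; apply sameB_sym, H_end; auto.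
    + intros u Hu d Hd; exists 1; split; [lra|]; intros; apply conf_near_refl; auto.
  - intros b Hb.
    have Hbi : inI b by (unfold inI; lra).
    destruct (separated_exists _ _ _ (H_inF c b Hc Hbi)) as [s [Hs0 Hs]].
    destruct (H_near c b (s/4) Hc Hbi) as [V0 [eps0 [_ [V0c [He0 P0]]]]]; [lra|].
    exists eps0; split; auto. intros a1 a2 Ha2 Ha1 Hd1 Hd2 [g Hg].
    have Hg' := Hg; destruct Hg' as [L1 [L2 L3]].
    have Ha1i : inI a1 by (unfold inI; lra).
    (* reorder H c b into a reference y0 that is close to g a1 *)
    destruct (P0 c a1 V0c Hc Ha1i ltac:(apply Rabs_def1; lra) _ (sameB_refl k (H c b)))
      as [w1 [Sw1 Nw1]].
    destruct (sameB_trans _ _ _ _ (sameB_sym _ _ _ Sw1) (L1 a1 ltac:(lra))) as [tau Etau].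
    set (y0 := Defs.act k tau (H c b)).
    have Ny : conf_near k y0 (g a1) (s/4) by rewrite Etau; apply conf_near_act.
    have Sy : separated k y0 s by apply separated_act.
    have Hex : forall t, a2 <= t <= a1 -> exists z, sameB k (H c t) z /\ conf_near k y0 z (s/4).
    { intros t Ht. apply (P0 c t V0c Hc); [unfold inI; lra| apply Rabs_def1; lra| apply sameB_act]. }
    have E1 : g a1 = local_lift c y0 (s/4) a1.
    { apply (lift_in_sheet c g a1 a1 a1 y0 s); auto; try lra.
      - intros t Ht; apply Hex; lra.
      - eapply conf_near_mono; [apply Ny| lra]. }
    exists (fun t => if Rlt_dec t a1 then local_lift c y0 (s/4) t else g t). split; [|split].
    + intros u Hu. destruct (Rlt_dec u a1) as [Hlt|Hge]; [|apply L1; lra].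
      apply (local_lift_spec c y0 (s/4) u), Hex; lra.
    + destruct (Rlt_dec 1 a1); [lra| auto].
    + apply cont_on_glue; [by symmetry| |auto].
      apply (local_lift_cont c y0 (s/4) s); auto; [lra| lra| intros t Ht; unfold inI; lra].
Qed.

Definition path_lift c : R -> Conf k :=
  epsilon (inhabits (fun _ : R => b0)) (fun g => lift_on c 0 g).

Lemma path_lift_spec c : U c -> lift_on c 0 (path_lift c).
Proof.
  intro Hc; apply (epsilon_spec (inhabits (fun _ : R => b0)) (fun g => lift_on c 0 g)).
  by apply lift_exists.
Qed.

Lemma lift_uniq c c' g g' : U c ->
  (forall t, inI t -> sameB k (H c t) (H c' t)) -> lift_on c 0 g -> lift_on c' 0 g' ->
  forall t, inI t -> g t = g' t.
Proof.
  intros Hc HS [L1 [L2 L3]] [L1' [L2' L3']] t Ht.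
  unfold inI in Ht.
  refine (lifts_agree k 0 1 g g' ltac:(lra) _ _ L3 L3' ltac:(congruence) t ltac:(lra)).
  - intros u Hu. eapply sameB_trans; [apply sameB_sym, L1; auto|].
    eapply sameB_trans; [apply HS; unfold inI; lra| apply L1'; auto].
  - intros u Hu. apply (separated_exists k e).
    eapply inF_sameB; [apply (H_inF c u Hc)| apply L1; auto]. unfold inI; lra.
Qed.

Definition lift_cont_at c u : Prop :=
  forall eps, 0 < eps -> exists V, openB k (Some n) V /\ V c /\
    forall c', V c' -> U c' -> conf_near k (path_lift c u) (path_lift c' u) eps.

(* Local propagation in time: continuity at a time a1 just above b implies
   continuity at the times u just below, since for c' near c the lift of c'
   on [u, a1] runs in the sheet through the lift of c at time b. *)
Lemma lift_cont_at_step c b : U c -> 0 <= b <= 1 -> exists eps, 0 < eps /\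
  forall a1 u, b <= a1 <= 1 -> a1 - b < eps -> 0 <= u < a1 -> b - u < eps ->
    lift_cont_at c a1 -> lift_cont_at c u.
Proof.
  intros Hc Hb. destruct (path_lift_spec c Hc) as [L1 [L2 L3]].
  have Hbi : inI b by (unfold inI; lra).
  set (yb := path_lift c b).
  destruct (separated_exists _ _ _ (inF_sameB _ _ _ _ (H_inF c b Hc Hbi) (L1 b Hb)))
    as [s [Hs0 Hs]].
  destruct (H_near c b (s/4) Hc Hbi) as [V0 [eps0 [HV0 [V0c [He0 P0]]]]]; [lra|].
  destruct (L3 b Hb (s/4)) as [eps1 [He1 C1]]; [lra|].
  exists (Rmin eps0 eps1); split; [apply Rmin_pos; auto|].
  pose proof (Rmin_l eps0 eps1); pose proof (Rmin_r eps0 eps1).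
  intros a1 u Ha1 Hd1 Hu Hd2 HG1 eps He.
  have Hui : inI u by (unfold inI; lra).
  destruct (HG1 (s/4) ltac:(lra)) as [V1 [HV1 [V1c P1]]].
  destruct (H_near c u (Rmin eps (s/4)) Hc Hui) as [Vu [epsu [HVu [Vuc [Heu Pu]]]]];
    [apply Rmin_pos; lra|].
  exists (fun c' => (V0 c' /\ V1 c') /\ Vu c').
  split; [apply openB_inter; [apply openB_inter|]; auto|]. split; [auto|].
  intros c' [[V0c' V1c'] Vuc'] Uc'.
  have Hex : forall t, u <= t <= a1 -> exists z, sameB k (H c' t) z /\ conf_near k yb z (s/4).
  { intros t Ht. apply (P0 c' t V0c' Uc'); [unfold inI; lra| apply Rabs_def1; lra| apply L1; lra]. }
  have Eu : path_lift c' u = local_lift c' yb (s/4) u.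
  { apply (lift_in_sheet c' (path_lift c') 0 u a1 yb s); auto; try lra.
    - by apply path_lift_spec.
    - replace (s/2) with (s/4 + s/4) by field.
      apply (conf_near_trans k yb (path_lift c a1)); [apply C1; [lra| apply Rabs_def1; lra]|].
      by apply P1. }
  destruct (Pu c' u Vuc' Uc' Hui ltac:(rewrite Rminus_diag Rabs_R0; lra) (path_lift c u)
    (L1 u ltac:(lra))) as [w [Sw Nw]].
  have Ew : w = path_lift c' u.
  { have [Su Nl] : sameB k (H c' u) (local_lift c' yb (s/4) u) /\
                   conf_near k yb (local_lift c' yb (s/4) u) (s/4)
      by apply local_lift_spec, Hex; lra.
    rewrite Eu. apply (sameB_near_eq k yb _ _ s (s/4) (s/4 + Rmin eps (s/4))); auto.
    - eapply sameB_trans; [apply sameB_sym, Su| apply Sw].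
    - apply (conf_near_trans k yb (path_lift c u)); [apply C1; [lra| apply Rabs_def1; lra]| apply Nw].
    - pose proof (Rmin_r eps (s/4)); lra. }
  rewrite -Ew. eapply conf_near_mono; [apply Nw| apply Rmin_l].
Qed.

(* By real induction from time 1, where every lift equals b0, down to time 0. *)
Lemma lift_cont_at_all c : U c -> forall u, 0 <= u <= 1 -> lift_cont_at c u.
Proof.
  intro Hc. destruct (path_lift_spec c Hc) as [_ [L2 _]].
  apply (real_induction_down 0 1 (fun a => forall u, a <= u <= 1 -> lift_cont_at c u));
    [lra| | |].
  - intros a a' Ha Haa' Ha' HG u Hu; apply HG; lra.
  - intros u Hu eps He. replace u with 1 by lra. exists U; split; [auto| split; [auto|]].
    intros c' Vc' Uc'. destruct (path_lift_spec c' Uc') as [_ [L2' _]]. rewrite L2 L2'.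
    apply conf_near_refl; auto.
  - intros b Hb. destruct (lift_cont_at_step c b Hc Hb) as [eps [He Hstep]].
    exists eps; split; auto. intros a1 a2 Ha2 Ha1 Hd1 Hd2 HG1 u Hu.
    destruct (Rle_dec a1 u) as [Hle|Hlt]; [apply HG1; lra|].
    apply (Hstep a1); try lra. apply HG1; lra.
Qed.

Lemma path_lift_section : local_section k n U (fun c => path_lift c 0).
Proof.
  have UF : forall c, U c -> inF k (Some n) c.
  { intros c Hc; destruct HU as [HU1 _]; apply openF_levelwise in HU1; apply HU1; auto. }
  have Hord : forall c, U c -> sameB k c (path_lift c 0).
  { intros c Hc. destruct (path_lift_spec c Hc) as [L1 _].
    eapply sameB_trans; [apply H_start; auto| apply L1; lra]. }
  split; [|split; [|split]].
  - intros c Hc. eapply inF_sameB; [apply UF; eauto| apply Hord; auto].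
  - exact Hord.
  - intros p c Hc. have Hc' : U (Defs.act k p c) by (destruct HU as [_ HU2]; apply HU2; auto).
    symmetry. apply (lift_uniq c (Defs.act k p c)); auto; try (apply path_lift_spec; auto).
    + intros t Ht; destruct HH as [_ [HH2 _]]; apply HH2; auto.
    + unfold inI; lra.
  - intros O HO c Hc Oc. apply openF_levelwise in HO. destruct HO as [O1 O2].
    destruct (O2 n (erefl n) _ Oc (O1 _ Oc)) as [eps [He Ho]].
    destruct (lift_cont_at_all c Hc 0 ltac:(lra) eps He) as [V [HV [Vc P]]].
    exists V; split; [auto| split; [auto|]]. intros c' Vc' Uc'.
    apply Ho.
    + eapply inF_sameB; [apply UF; eauto| apply Hord; auto].
    + intros i j Hj. rewrite Rabs_minus_sym. apply sup_lt_coord, P; auto.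
Qed.

End HomotopyLifting.

Lemma cat_to_secat k n e m : cat_incl_le k n e m -> secat_le k n m.
Proof.
  intros [U [HU Hcov]]. exists U; split; auto.
  intros i Hi. destruct (HU i Hi) as [HUo [H [b0 [Hb0 [HH [H0 H1]]]]]].
  split; auto. eexists; eapply path_lift_section; eauto.
Qed.

Lemma openB_restr k n r V : openB k (tdim n r) V ->
  openB k (Some n) (fun c => V c /\ inF k (Some n) c).
Proof.
  intros [HV Hinv].
  split; [|intros s c [H1 H2]; split; [apply Hinv; auto| apply inF_act; auto]].
  destruct r as [r'|]; simpl in *.
  - destruct HV as [V1 V2]; split; [tauto|].
    intros c [Vc Fc]. destruct (V2 c Vc) as [eps [He Ho]]. exists eps; split; auto.
    intros c' Fc' Hn. split; auto. apply Ho.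
    + destruct Fc' as [F1 F2]; split; auto; intro i; eapply inR_mono; [apply F1| apply leq_addr].
    + intros i j Hj. destruct (leqP n j) as [Hnj|Hnj].
      * destruct Fc as [F1 _]; destruct Fc' as [F1' _].
        rewrite (F1 i j Hnj) (F1' i j Hnj) Rminus_diag Rabs_R0; auto.
      * apply Hn; auto.
  - destruct HV as [_ V2]. exact (V2 n).
Qed.

Lemma catB_to_cat k n r m : catB_le k n (tdim n r) m -> cat_incl_le k n (tdim n r) m.
Proof.
  intros [U [HU Hcov]]. exists (fun i c => U i c /\ inF k (Some n) c). split.
  - intros i Hi. destruct (HU i Hi) as [HUo [H [b0 [Hb0 [[HH1 [HH2 HH3]] [H0 H1]]]]]].
    split; [apply (openB_restr k n r); auto|].
    exists H, b0; split; [auto| split; [split; [|split]| split]].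
    + intros c t [Uc _] Ht; auto.
    + intros s c t [Uc _] Ht; auto.
    + intros O HO c t [Uc Fc] Ht Oc.
      destruct (HH3 O HO c t Uc Ht Oc) as [V [eps [HV [Vc [He P]]]]].
      exists (fun c => V c /\ inF k (Some n) c), eps; split; [apply (openB_restr k n r); auto|].
      split; [auto| split; [auto|]]. intros c' t' [Vc' _] [Uc' _] Ht' Hd; auto.
    + intros c [Uc _]; auto.
    + intros c [Uc _]; auto.
  - intros c Hc. destruct (Hcov c Hc) as [i [Hi Ui]]. exists i; auto.
Qed.

Lemma inF_of_close k M y s z : inF k (Some M) y -> separated k y s -> 0 < s ->
  (forall a, inR (Some M) (z a)) -> (forall a j, Rabs (z a j - y a j) < s/2) ->
  inF k (Some M) z.
Proof.
  intros Fy Hs Hs0 Hz Hn. split; auto. intros a b Hab E.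
  destruct (Hs a b Hab) as [j Hj]. have := Hn a j; have := Hn b j. rewrite E.
  intros H1 H2. have : Rabs (y a j - y b j) < s; [|lra].
  replace (y a j - y b j) with ((y a j - z b j) + (z b j - y b j)) by ring.
  eapply Rle_lt_trans; [apply Rabs_triang|]. rewrite Rabs_minus_sym in H2. lra.
Qed.

Lemma conf_bounded k m c : inF k (Some m) c -> exists B, 0 <= B /\ forall a j, Rabs (c a j) <= B.
Proof.
  intros [Fc _].
  have Hprefix : forall a M, exists B, 0 <= B /\ forall j, (j < M)%N -> Rabs (c a j) <= B.
  { intros a; induction M as [|M [B [HB IH]]].
    - exists 0; split; [lra| intros j Hj; inversion Hj].
    - exists (Rmax B (Rabs (c a M))); split; [eapply Rle_trans; [apply HB| apply Rmax_l]|].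
      intros j Hj. rewrite ltnS leq_eqVlt in Hj. case/orP: Hj => [/eqP ->|Hj]; [apply Rmax_r|].
      eapply Rle_trans; [apply IH; auto| apply Rmax_l]. }
  have Hpoint : forall a, exists B, 0 <= B /\ forall j, Rabs (c a j) <= B.
  { intro a. destruct (Hprefix a m) as [B [HB HB2]]; exists B; split; auto. intro j.
    destruct (leqP m j) as [Hj|Hj]; [rewrite (Fc a j Hj) Rabs_R0; auto| apply HB2; auto]. }
  have Hseq : forall l : seq 'I_k,
      exists B, 0 <= B /\ forall a, a \in l -> forall j, Rabs (c a j) <= B.
  { elim=> [|y l [B [HB IH]]]; [exists 0; split; [lra| intros a Ha; by rewrite in_nil in Ha]|].
    destruct (Hpoint y) as [B' [HB' Hy]].
    exists (Rmax B B'); split; [eapply Rle_trans; [apply HB| apply Rmax_l]|].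
    intros a; rewrite in_cons => /orP [/eqP ->|Ha] j.
    - eapply Rle_trans; [apply Hy| apply Rmax_r].
    - eapply Rle_trans; [apply IH; auto| apply Rmax_l]. }
  destruct (Hseq (enum 'I_k)) as [B [HB P]]; exists B; split; auto.
  intros a; apply P; by rewrite mem_enum.
Qed.

Section Truncation.
Variable n : nat.

Definition trunc_pt (x : Rpt) : Rpt := fun j => if (j < n)%N then x j else 0.
Definition trunc_conf k (c : Conf k) : Conf k := fun a => trunc_pt (c a).

Lemma trunc_pt_inR x : inR (Some n) (trunc_pt x).
Proof.
  intros j Hj; rewrite /trunc_pt; case: ltnP => // H.
  exfalso; move: H; by rewrite ltnNge Hj.
Qed.

Lemma trunc_conf_id k c : inF k (Some n) c -> trunc_conf k c = c.
Proof.
  intros [Fc _]. apply functional_extensionality => a; apply functional_extensionality => j.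
  rewrite /trunc_conf /trunc_pt. case: ltnP => Hj //. symmetry; apply Fc; auto.
Qed.

Lemma open_trunc_preimage k e X : openF k (Some n) X ->
  openF k e (fun c => inF k e c /\ inF k (Some n) (trunc_conf k c) /\ X (trunc_conf k c)).
Proof.
  intros HX; apply openF_levelwise in HX; destruct HX as [X1 X2].
  apply openF_levelwise; split; [tauto|].
  intros m Hl c [Fc [Fq Xq]] Fm.
  destruct (X2 n (erefl n) _ Xq Fq) as [e1 [He1 P1]].
  destruct (separated_exists _ _ _ Fq) as [s [Hs0 Hs]].
  exists (Rmin e1 (s/2)); split; [apply Rmin_pos; lra|].
  pose proof (Rmin_l e1 (s/2)); pose proof (Rmin_r e1 (s/2)).
  intros c' Fm' Hn.
  have Hpr : forall a j, Rabs (trunc_conf k c' a j - trunc_conf k c a j) < Rmin e1 (s/2).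
  { intros a j. rewrite /trunc_conf /trunc_pt. case: ltnP => Hj.
    - apply (near_fin_coord k m c c'); auto; apply Rmin_pos; lra.
    - rewrite Rminus_diag Rabs_R0; apply Rmin_pos; lra. }
  have Fq' : inF k (Some n) (trunc_conf k c').
  { apply (inF_of_close k n (trunc_conf k c) s); auto; [intro a; apply trunc_pt_inR|].
    intros a j; have := Hpr a j; lra. }
  split; [eapply inF_of_level; eauto| split; auto].
  apply P1; auto. intros i j Hj; have := Hpr i j; lra.
Qed.

End Truncation.

Lemma segment_estimate u u'' x x' b eta B Kb :
  0 <= u'' <= 1 -> Rabs (x' - x) < eta -> Rabs (u'' - u) < eta -> Rabs x <= B -> Rabs b <= Kb ->
  0 <= B -> 0 <= Kb ->
  Rabs (((1 - u'') * x' + u'' * b) - ((1 - u) * x + u * b)) < eta * (1 + B + Kb).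
Proof.
  intros Hu H1 H2 H3 H4 HB HK.
  replace (((1 - u'') * x' + u'' * b) - ((1 - u) * x + u * b))
    with ((1 - u'') * (x' - x) + ((u - u'') * x + (u'' - u) * b)) by ring.
  eapply Rle_lt_trans; [apply Rabs_triang|].
  eapply Rle_lt_trans; [apply Rplus_le_compat_l, Rabs_triang|].
  rewrite !Rabs_mult. rewrite (Rabs_minus_sym u u'').
  have A1 : Rabs (1 - u'') <= 1 by (rewrite Rabs_right; lra).
  have P1 := Rabs_pos (x' - x). have P2 := Rabs_pos (u'' - u).
  have P3 := Rabs_pos x. have P4 := Rabs_pos b. have P5 := Rabs_pos (1 - u'').
  nra.
Qed.

(* The map up m picks a
   level of e above the level m and above n; it exists because e = n + r, r >= 1. *)
Section Contraction.
Variables (k n : nat) (e : dim) (U : Conf k -> Prop) (s : Conf k -> Conf k).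
Hypothesis HU : openB k (Some n) U.
Hypothesis Hs : local_section k n U s.
Variable up : nat -> nat.
Hypothesis up_level : forall m, is_level e m -> is_level e (up m).
Hypothesis up_ge : forall m, is_level e m -> (m <= up m)%N.
Hypothesis up_gt_n : forall m, is_level e m -> (n < up m)%N.
Hypothesis level_exists : exists m, is_level e m.

(* The target configuration: the points 0, 1, ..., k-1 on the coordinate axis of
   index n, the first direction outside R^n. *)
Definition b0 : Conf k := fun a j => if (j == n)%N then INR (nat_of_ord a) else 0.

Lemma b0_inR a : inR (Some n.+1) (b0 a).
Proof. intros j Hj; rewrite /b0. case: eqP => // E. subst j. by rewrite ltnn in Hj. Qed.

Lemma b0_injective a b : a <> b -> b0 a <> b0 b.
Proof.
  intros Hab E. apply Hab. have := equal_f E n. rewrite /b0 eqxx. intro E'.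
  apply val_inj; simpl. apply INR_eq; auto.
Qed.

Lemma b0_bound a j : Rabs (b0 a j) <= INR k.
Proof.
  rewrite /b0; case: eqP => _.
  - rewrite Rabs_right; [|apply Rle_ge, pos_INR]. apply le_INR. apply/leP. apply ltnW, ltn_ord.
  - rewrite Rabs_R0; apply pos_INR.
Qed.

Lemma b0_inF : inF k e b0.
Proof.
  destruct level_exists as [m Hm]. split; [|apply b0_injective].
  intro a. apply (inR_of_level e (up m)); [apply up_level; auto|].
  eapply inR_mono; [apply b0_inR| apply up_gt_n; auto].
Qed.

Definition segment (sg : {perm 'I_k}) (c : Conf k) (u : R) : Conf k :=
  fun a j => (1 - u) * c (sg a) j + u * b0 a j.

Lemma segment_inR sg c u m a : (forall a, inR (Some m) (c a)) -> is_level e m ->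
  inR (Some (up m)) (segment sg c u a).
Proof.
  intros Hc Hl j Hj. rewrite /segment. rewrite (Hc (sg a) j (leq_trans (up_ge m Hl) Hj)).
  rewrite (b0_inR a j (leq_trans (up_gt_n m Hl) Hj)). ring.
Qed.

Lemma segment_inF (sg : {perm 'I_k}) c u : inF k e c -> 0 <= u <= 1 ->
  (u < 1 -> forall a b, a <> b -> exists j, (j < n)%N /\ c (sg a) j <> c (sg b) j) ->
  inF k e (segment sg c u).
Proof.
  intros Fc Hu Hd. destruct (inF_has_level _ _ _ Fc) as [m [Hl [Fm _]]]. split.
  - intro a; apply (inR_of_level e (up m)); [apply up_level; auto| apply segment_inR; auto].
  - intros a b Hab E. destruct (Req_dec u 1) as [E1|E1].
    + subst u. apply (b0_injective a b Hab). apply functional_extensionality => j.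
      have := equal_f E j. rewrite /segment. intro E'. lra.
    + destruct (Hd ltac:(lra) a b Hab) as [j [Hj Hne]]. apply Hne.
      have := equal_f E j. rewrite /segment /b0. have -> : (j == n) = false.
      { apply/eqP => E2; subst j; by rewrite ltnn in Hj. }
      intro E'. apply (Rmult_eq_reg_l (1 - u)); lra.
Qed.

Lemma segment_near (sg : {perm 'I_k}) O m c u : openF k e O -> is_level e m ->
  inF k (Some m) c -> 0 <= u <= 1 -> O (segment sg c u) ->
  exists eta, 0 < eta /\ forall c'' u'', inF k (Some m) c'' -> 0 <= u'' <= 1 ->
    near_fin k m c eta c'' -> Rabs (u'' - u) < eta -> O (segment sg c'' u'').
Proof.
  intros HO Hl Fc Hu Oy. apply openF_levelwise in HO. destruct HO as [O1 O2].
  set (M := up m). have HlM : is_level e M by apply up_level.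
  have FyM : inF k (Some M) (segment sg c u).
  { split; [intro a; apply segment_inR; auto; apply Fc| apply (O1 _ Oy)]. }
  destruct (O2 M HlM _ Oy FyM) as [r0 [Hr0 P0]].
  destruct (separated_exists _ _ _ FyM) as [sy [Hsy Sy]].
  destruct (conf_bounded _ _ _ Fc) as [B [HB PB]].
  set (rho := Rmin r0 (sy/2)). have Hrho : 0 < rho by apply Rmin_pos; lra.
  have Kpos : 0 < 1 + B + INR k by (pose proof (pos_INR k); lra).
  exists (rho / (1 + B + INR k)); split; [apply Rdiv_lt_0_compat; auto|].
  intros c'' u'' Fc'' Hu'' Hn Hud.
  have Est : forall a j, Rabs (segment sg c'' u'' a j - segment sg c u a j) < rho.
  { intros a j. replace rho with ((rho / (1 + B + INR k)) * (1 + B + INR k)) by (field; lra).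
    apply segment_estimate; auto; [|apply b0_bound| apply pos_INR].
    apply (near_fin_coord k m c c''); auto. apply Rdiv_lt_0_compat; auto. }
  have FzM : inF k (Some M) (segment sg c'' u'').
  { apply (inF_of_close k M (segment sg c u) sy); auto.
    - intro a; apply segment_inR; auto; apply Fc''.
    - intros a j; have := Est a j; have := Rmin_r r0 (sy/2); fold rho; lra. }
  apply P0; auto. intros i j Hj; have := Est i j; have := Rmin_l r0 (sy/2); fold rho; lra.
Qed.

Lemma segment_tube (sg : {perm 'I_k}) O m c al be : openF k e O -> is_level e m ->
  inF k (Some m) c -> 0 <= al <= be -> be <= 1 -> (forall u, al <= u <= be -> O (segment sg c u)) ->
  exists rho, 0 < rho /\ forall c'', inF k (Some m) c'' -> near_fin k m c rho c'' ->
    forall u, al <= u <= be -> O (segment sg c'' u).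
Proof.
  intros HO Hl Fc Hab Hb1 HOu.
  apply (real_induction_down al be (fun a => exists rho, 0 < rho /\ forall c'', inF k (Some m) c'' ->
    near_fin k m c rho c'' -> forall u, a <= u <= be -> O (segment sg c'' u))); [lra| | |].
  - intros a a' Ha Haa' Ha' [rho [Hr P]]; exists rho; split; auto.
    intros c'' F N u Hu; apply P; auto; lra.
  - destruct (segment_near sg O m c be HO Hl Fc ltac:(lra) (HOu be ltac:(lra))) as [eta [He P]].
    exists eta; split; auto. intros c'' F N u Hu. replace u with be by lra.
    apply P; auto; [lra| rewrite Rminus_diag Rabs_R0; auto].
  - intros b Hb. destruct (segment_near sg O m c b HO Hl Fc ltac:(lra) (HOu b Hb)) as [eta [He P]].
    exists eta; split; auto. intros a1 a2 Ha2 Ha1 Hd1 Hd2 [r1 [Hr1 P1]].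
    exists (Rmin r1 eta); split; [apply Rmin_pos; auto|].
    intros c'' F N u Hu. destruct (Rle_dec a1 u) as [Hle|Hlt].
    + apply P1; auto; [eapply near_fin_mono; [apply N| apply Rmin_l]| lra].
    + apply P; auto; [lra| eapply near_fin_mono; [apply N| apply Rmin_r]| apply Rabs_def1; lra].
Qed.

Lemma open_segment_on_interval (sg : {perm 'I_k}) O al be : openF k e O ->
  0 <= al <= be -> be <= 1 ->
  openF k e (fun c => inF k e c /\ forall u, al <= u <= be -> O (segment sg c u)).
Proof.
  intros HO Hab Hbe. apply openF_levelwise; split; [intros c' [F _]; auto|].
  intros m Hl c' [F P] Fm.
  destruct (segment_tube sg O m c' al be HO Hl Fm Hab Hbe P) as [rho [Hr Pr]].
  exists rho; split; auto. intros c'' Fm'' N. split; [eapply inF_of_level; eauto|].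
  apply Pr; auto.
Qed.

Definition U_ext (c : Conf k) : Prop :=
  inF k e c /\ inF k (Some n) (trunc_conf n k c) /\ U (trunc_conf n k c).

Lemma U_ext_open : openB k e U_ext.
Proof.
  split; [apply open_trunc_preimage; destruct HU; auto|].
  intros p c [F1 [F2 F3]]; split; [apply inF_act; auto| split].
  - change (inF k (Some n) (Defs.act k p (trunc_conf n k c))); apply inF_act; auto.
  - change (U (Defs.act k p (trunc_conf n k c))). destruct HU as [_ Hi]. apply (Hi p _ F3).
Qed.

Lemma U_ext_act c p : U_ext c -> U_ext (Defs.act k p c).
Proof. destruct U_ext_open as [_ Hi]; apply Hi. Qed.

Definition section_perm (c : Conf k) : {perm 'I_k} :=
  epsilon (inhabits 1%g) (fun sg => s (trunc_conf n k c) = Defs.act k sg (trunc_conf n k c)).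

Lemma section_perm_spec c : U_ext c ->
  s (trunc_conf n k c) = Defs.act k (section_perm c) (trunc_conf n k c).
Proof.
  intros [_ [_ Hc]]. destruct Hs as [_ [S2 _]]. destruct (S2 _ Hc) as [sg Hsg].
  apply (epsilon_spec (inhabits 1%g)
    (fun sg => s (trunc_conf n k c) = Defs.act k sg (trunc_conf n k c))).
  exists sg; auto.
Qed.

(* Invariance of s makes section_perm equivariant. *)
Lemma section_perm_act c p : U_ext c -> section_perm c = (section_perm (Defs.act k p c) * p)%g.
Proof.
  intros Wc. have Wc' := U_ext_act c p Wc.
  have E1 := section_perm_spec c Wc. have E2 := section_perm_spec _ Wc'.
  destruct Hs as [_ [_ [S3 _]]].
  have E3 : trunc_conf n k (Defs.act k p c) = Defs.act k p (trunc_conf n k c) by reflexivity.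
  rewrite E3 S3 in E2; [|destruct Wc as [_ [_ Hc]]; auto].
  rewrite E1 act_comp in E2. eapply act_perm_inj; [|apply E2].
  destruct Wc as [_ [[_ Hd] _]]; auto.
Qed.

(* Continuity of s makes section_perm locally constant. *)
Lemma section_perm_locally_constant c : U_ext c ->
  exists N, openF k e N /\ N c /\ forall c', N c' -> U_ext c' /\ section_perm c' = section_perm c.
Proof.
  intros Wc. set (q := trunc_conf n k c).
  have Fq : inF k (Some n) q by destruct Wc as [_ [? _]].
  have Uq : U q by destruct Wc as [_ [_ ?]].
  destruct (separated_exists _ _ _ Fq) as [sq [Hsq Sq]].
  set (d := sq / 4).
  destruct Hs as [S1 [S2 [S3 S4]]].
  destruct (S4 (fun w => inF k (Some n) w /\ conf_near k (s q) (Defs.act k 1%g w) d)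
     (open_ball k (Some n) (s q) 1%g d) q Uq) as [V' [HV' [V'q PV']]].
  { split; [apply S1; auto| rewrite act_id; apply conf_near_refl; unfold d; lra]. }
  set (X := fun w => (V' w /\ U w) /\ (inF k (Some n) w /\ conf_near k q (Defs.act k 1%g w) d)).
  have HX : openF k (Some n) X.
  { apply open_inter; [apply open_inter; [destruct HV'; auto| destruct HU; auto]| apply open_ball]. }
  exists (fun c' => inF k e c' /\ inF k (Some n) (trunc_conf n k c') /\ X (trunc_conf n k c')).
  split; [by apply open_trunc_preimage|]. split.
  { split; [apply Wc| split; [auto|]]. split; [split; auto|split; auto].
    rewrite act_id; apply conf_near_refl; unfold d; lra. }
  intros c' [F1 [F2 [[V'c' Uc'] [_ Nq]]]].
  have Wc' : U_ext c' by split; [|split].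
  split; auto.
  have Ns := PV' _ V'c' Uc'. destruct Ns as [_ Ns]. rewrite act_id in Ns. rewrite act_id in Nq.
  rewrite (section_perm_spec c' Wc') (section_perm_spec c Wc) in Ns. fold q in Ns.
  apply/permP => a.
  refine (separated_index_eq k q sq _ _ _ d d Sq (Nq (section_perm c' a)) (Ns a) _).
  unfold d; lra.
Qed.

Definition contraction (c : Conf k) (u : R) : Conf k := segment (section_perm c) c u.

Lemma contraction_act c p u : U_ext c -> contraction (Defs.act k p c) u = contraction c u.
Proof.
  intros Wc. rewrite /contraction (section_perm_act c p Wc).
  apply functional_extensionality => a.
  apply functional_extensionality => j. rewrite /segment /Defs.act permM. reflexivity.
Qed.

(* Before time 1 the points stay distinct because the orderings s (trunc c)
   consist of distinct points of R^n. *)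
Lemma contraction_inF c u : U_ext c -> inI u -> inF k e (contraction c u).
Proof.
  intros Wc Hu. apply segment_inF; [destruct Wc; auto| unfold inI in Hu; lra|].
  intros _ a b Hab. have Fs : inF k (Some n) (s (trunc_conf n k c)).
  { destruct Hs as [S1 _]. apply S1. destruct Wc as [_ [_ ?]]; auto. }
  rewrite (section_perm_spec c Wc) in Fs. destruct Fs as [_ Fd].
  have Hne := Fd a b Hab. rewrite /Defs.act in Hne.
  apply NNPP; intro Hno. apply Hne. apply functional_extensionality => j.
  rewrite /trunc_conf /trunc_pt. case: ltnP => Hj //. apply NNPP; intro; apply Hno; eauto.
Qed.

(* Continuity of the contraction on U_ext x I: near (c, t) the permutation
   section_perm is constant and the segment is jointly continuous. *)
Lemma contraction_cont : forall O, openB k e O -> forall c t, U_ext c -> inI t ->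
  O (contraction c t) ->
  exists V eps, openB k e V /\ V c /\ 0 < eps /\
    forall c' t', V c' -> U_ext c' -> inI t' -> Rabs (t' - t) < eps -> O (contraction c' t').
Proof.
  intros O [HO HOi] c t Wc Ht Oc.
  destruct (section_perm_locally_constant c Wc) as [N1 [HN1 [N1c P1]]].
  destruct (inF_has_level _ _ _ (proj1 Wc)) as [m0 [Hl0 Fm0]].
  destruct (segment_near (section_perm c) O m0 c t HO Hl0 Fm0 Ht Oc) as [eta [Heta Peta]].
  set (eps := eta / 2).
  set (al := Rmax 0 (t - eps)). set (be := Rmin 1 (t + eps)).
  pose proof (Rmax_l 0 (t - eps)); pose proof (Rmax_r 0 (t - eps)).
  pose proof (Rmin_l 1 (t + eps)); pose proof (Rmin_r 1 (t + eps)).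
  have Hal : 0 <= al <= be by (unfold al, be, eps, inI in *; split; [lra|];
    apply Rmax_lub; apply Rmin_glb; lra).
  set (N2 := fun c' => inF k e c' /\ forall u, al <= u <= be -> O (segment (section_perm c) c' u)).
  have HN2 : openF k e N2 by apply open_segment_on_interval; auto; lra.
  have N2c : N2 c.
  { split; [apply Wc|]. intros u Hu. apply Peta; auto.
    - unfold al, be, inI in *; lra.
    - intros i j Hj; rewrite Rminus_diag Rabs_R0; auto.
    - apply Rabs_def1; unfold al, be, eps in *; lra. }
  exists (fun c' => exists p, N1 (Defs.act k p c') /\ N2 (Defs.act k p c')), eps.
  split; [apply (open_saturation k e (fun c0 => N1 c0 /\ N2 c0)), open_inter; auto|].
  split; [exists 1%g; rewrite act_id; auto|]. split; [unfold eps; lra|].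
  intros c' t' [p [N1c' [_ N2c']]] Wc' Ht' Htt.
  destruct (P1 _ N1c') as [Wp Sp].
  rewrite -(contraction_act c' p t' Wc') /contraction Sp. apply N2c'.
  unfold al, be, inI in *. apply Rabs_def2 in Htt. split.
  - apply Rmax_lub; lra.
  - apply Rmin_glb; lra.
Qed.

Lemma U_ext_nullhomotopic : incl_nullhomotopic k e e U_ext.
Proof.
  exists contraction, b0. split; [apply b0_inF|]. split; [split; [|split]|split].
  - intros c t Wc Ht; apply contraction_inF; auto.
  - intros p c t Wc Ht; rewrite contraction_act; auto; apply sameB_refl.
  - apply contraction_cont.
  - intros c Wc. exists (section_perm c). apply functional_extensionality => a.
    apply functional_extensionality => j. rewrite /contraction /segment /Defs.act. ring.
  - intros c Wc. replace (contraction c R1) with b0; [apply sameB_refl|].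
    apply functional_extensionality => a. apply functional_extensionality => j.
    rewrite /contraction /segment. ring.
Qed.

End Contraction.

(* For e = n + r with r >= 1 (or r infinite) every level of e is refined by a
   level exceeding n; this is the only place where r >= 1 enters. *)
Lemma ambient_levels n r : (match r with Some r' => is_true (1 <= r')%N | None => True end) ->
  exists up : nat -> nat,
    (forall m, is_level (tdim n r) m -> is_level (tdim n r) (up m)) /\
    (forall m, is_level (tdim n r) m -> (m <= up m)%N) /\
    (forall m, is_level (tdim n r) m -> (n < up m)%N) /\
    (exists m, is_level (tdim n r) m).
Proof.
  destruct r as [r'|]; simpl => Hr.
  - exists (fun _ => (n + r')%N); split; [|split; [|split]]; auto.
    + by move=> m ->.
    + move=> m _. by rewrite -{1}(addn0 n) ltn_add2l.
    + by exists (n + r')%N.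
  - exists (fun m => maxn m n.+1); split; [|split; [|split]]; auto.
    + move=> m _; apply leq_maxl.
    + move=> m _; apply leq_maxr.
    + by exists O.
Qed.

Lemma inF_tdim k n r c : inF k (Some n) c -> inF k (tdim n r) c.
Proof.
  intros [F1 F2]; split; auto. intro a.
  destruct r as [r'|]; simpl; [eapply inR_mono; [apply F1| apply leq_addr]| exists n; apply F1].
Qed.

Lemma secat_to_catB k n r m :
  (match r with Some r' => is_true (1 <= r')%N | None => True end) ->
  secat_le k n m -> catB_le k n (tdim n r) m.
Proof.
  intros Hr [U [HU Hcov]].
  destruct (ambient_levels n r Hr) as [up [Hup1 [Hup2 [Hup3 Hlev]]]].
  exists (fun i => U_ext k n (tdim n r) (U i)). split.
  - intros i Hi. destruct (HU i Hi) as [HUo [s Hs]]. split.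
    + by apply U_ext_open.
    + exact (U_ext_nullhomotopic k n (tdim n r) (U i) s HUo Hs up Hup1 Hup2 Hup3 Hlev).
  - intros c Hc. destruct (Hcov c Hc) as [i [Hi Ui]]. exists i; split; auto.
    rewrite /U_ext (trunc_conf_id n k c Hc). split; [apply inF_tdim; auto| split; auto].
Qed.

Lemma is_least_iff (P Q : nat -> Prop) m :
  (forall m, P m <-> Q m) -> (is_least P m <-> is_least Q m).
Proof.
  intros H; split; intros [H1 H2]; split.
  - apply H; auto.
  - intros m' Hm'; apply H2, H; auto.
  - apply H; auto.
  - intros m' Hm'; apply H2, H; auto.
Qed.


Theorem theorem1 (n k : nat) (r : option nat) :
  (1 <= n)%N -> (1 <= k)%N ->
  (match r with Some r' => is_true (1 <= r')%N | None => True end) ->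
  forall m : nat,
    (is_least (secat_le k n) m <-> is_least (cat_incl_le k n (tdim n r)) m) /\
    (is_least (cat_incl_le k n (tdim n r)) m <-> is_least (catB_le k n (tdim n r)) m).
Proof.
  intros _ _ Hr m.
  have Hc : forall m, secat_le k n m -> catB_le k n (tdim n r) m by intro; apply secat_to_catB.
  have Hb : forall m, catB_le k n (tdim n r) m -> cat_incl_le k n (tdim n r) m
    by intro; apply catB_to_cat.
  have Ha : forall m, cat_incl_le k n (tdim n r) m -> secat_le k n m by intro; apply cat_to_secat.
  split; apply is_least_iff; intro m0; split; auto.
Qed.
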